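(* Let $N = q^k n^2$ be an odd perfect number given in Eulerian form. Then $$I(n) > \left(\frac{8}{5}\right)^{\frac{\ln(4/3)}{\ln(13/9)}} \approx 1.44440557.$$
   Context: For a positive integer $x$, $\sigma(x)$ denotes the sum of the positive divisors of $x$, and $I(x) = \sigma(x)/x$ is the abundancy index. A positive integer $N$ is perfect if $\sigma(N) = 2N$. An odd perfect number $N$ is said to be given in Eulerian form if $N = q^k n^2$ where $q$ is a prime, $q \equiv k \equiv 1 \pmod 4$, $n$ is a positive integer, and $\gcd(q,n) = 1$. *)

From Stdlib Require Import Reals.
From mathcomp Require Import all_boot.

Definition sigma (x : nat) : nat := \sum_(d <- divisors x) d.

Definition abundancy (x : nat) : R := Rdiv (INR (sigma x)) (INR x).

Definition perfect (N : nat) : Prop := 0 < N /\ sigma N = 2 * N.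

Definition odd_perfect (N : nat) : Prop := odd N /\ perfect N.

Definition eulerian_form (N q k n : nat) : Prop :=
  odd_perfect N /\ N = q ^ k * n ^ 2 /\ prime q /\
  q %% 4 = 1 /\ k %% 4 = 1 /\ coprime q n.

From Pilot Require Import Defs.
From Stdlib Require Import Reals Lra Psatz.
From mathcomp Require Import all_boot zify.

Set Implicit Arguments.
Unset Strict Implicit.

(* For odd n, the squared abundancy is controlled by the
   abundancy itself through the logarithmic inequality
       ln(4/3) * ln I(n^2) <= ln(13/9) * ln I(n).                       (K)
   Since sigma, hence I, is multiplicative on coprime arguments, (K) reduces
   to odd prime powers x = p^a.  There sigma(x^2) + x = sigma(x) * (1 + x)
   and x + 1 <= sigma(x) <= 3x/2; for x >= 5 this forces
   I(x^2)^4 <= I(x)^5, which together with (4/3)^5 <= (13/9)^4 gives (K);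
   the remaining case x = 3 is the equality case I(3) = 4/3, I(9) = 13/9.
   For an odd perfect number q^k n^2 in Eulerian form we have q >= 5, so
   I(q^k) < q/(q-1) <= 5/4 and I(n^2) = 2 / I(q^k) > 8/5.  Feeding this
   into (K) and exponentiating yields I(n) > (8/5)^(ln(4/3)/ln(13/9)).
   The divisor sum is written Defs.sigma because the Reals library exports
   an unrelated function named sigma. *)

Lemma divisors_coprime_mul m n : 0 < m -> 0 < n -> coprime m n ->
  perm_eq (divisors (m * n)) [seq d1 * d2 | d1 <- divisors m, d2 <- divisors n].
Proof.
move=> m_gt0 n_gt0 cop_mn.
have mn_gt0 : 0 < m * n by rewrite muln_gt0 m_gt0 n_gt0.
apply: uniq_perm; first exact: divisors_uniq.
  apply: allpairs_uniq; try exact: divisors_uniq.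
  move=> [a b] [c d] /allpairsP[[a' b'] /= [Ha Hb [-> ->]]].
  move=> /allpairsP[[c' d'] /= [Hc Hd [-> ->]]] /= eq_prod.
  rewrite -!dvdn_divisors // in Ha Hb Hc Hd.
  have cop_bm : coprime b' m by rewrite coprime_sym (coprime_dvdr Hb cop_mn).
  have cop_dm : coprime d' m by rewrite coprime_sym (coprime_dvdr Hd cop_mn).
  have cop_an : coprime a' n by rewrite (coprime_dvdl Ha cop_mn).
  have cop_cn : coprime c' n by rewrite (coprime_dvdl Hc cop_mn).
  have -> : a' = c'.
    have := congr1 (gcdn m) eq_prod.
    rewrite Gauss_gcdl 1?coprime_sym // Gauss_gcdl 1?coprime_sym //.
    by rewrite (gcdn_idPr Ha) (gcdn_idPr Hc).
  have -> // : b' = d'.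
  have := congr1 (gcdn n) eq_prod.
  rewrite Gauss_gcdr 1?coprime_sym // Gauss_gcdr 1?coprime_sym //.
  by rewrite (gcdn_idPr Hb) (gcdn_idPr Hd).
move=> d; apply/idP/idP; last first.
  move=> /allpairsP[[a b] /= [Ha Hb ->]].
  rewrite -!dvdn_divisors // in Ha Hb *.
  exact: dvdn_mul.
rewrite -dvdn_divisors // => dvd_d.
apply/allpairsP; exists (gcdn m d, gcdn n d) => /=.
split; rewrite -?dvdn_divisors ?dvdn_gcdl //.
apply/eqP; rewrite eqn_dvd; apply/andP; split.
  have dvd_dn : d %| gcdn m d * n by rewrite muln_gcdl dvdn_gcd dvd_d dvdn_mulr.
  by rewrite muln_gcdr dvdn_gcd dvd_dn dvdn_mull.
rewrite Gauss_dvd ?dvdn_gcdr //.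
exact: (coprime_dvdl (dvdn_gcdl _ _) (coprime_dvdr (dvdn_gcdl _ _) cop_mn)).
Qed.

Lemma sigma_coprime_mul m n : 0 < m -> 0 < n -> coprime m n ->
  Defs.sigma (m * n) = Defs.sigma m * Defs.sigma n.
Proof.
move=> m_gt0 n_gt0 cop_mn.
rewrite /Defs.sigma (perm_big _ (divisors_coprime_mul m_gt0 n_gt0 cop_mn)).
rewrite big_allpairs_dep /= big_distrl /=.
by apply: eq_bigr => a _; rewrite big_distrr.
Qed.

Lemma sigma_prime_power p a : prime p -> Defs.sigma (p ^ a) = \sum_(i < a.+1) p ^ i.
Proof.
move=> p_pr; have p_gt1 := prime_gt1 p_pr.
have pa_gt0 : 0 < p ^ a by rewrite expn_gt0 prime_gt0.
have divs : perm_eq (divisors (p ^ a)) [seq p ^ i | i <- iota 0 a.+1].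
  apply: uniq_perm; first exact: divisors_uniq.
    by rewrite map_inj_uniq ?iota_uniq //; exact: expnI.
  move=> d; rewrite -dvdn_divisors //; apply/dvdn_pfactor/mapP => //.
    by move=> [i Hi ->]; exists i => //; rewrite mem_iota /= add0n ltnS.
  by move=> [i Hi ->]; exists i => //; move: Hi; rewrite mem_iota /= add0n ltnS.
by rewrite /Defs.sigma (perm_big _ divs) big_map -(big_mkord xpredT) /index_iota subn0.
Qed.

Lemma sigma_prime_power_geom p a : prime p ->
  p.-1 * Defs.sigma (p ^ a) + 1 = p * p ^ a.
Proof.
move=> p_pr; have p_gt0 := prime_gt0 p_pr.
by rewrite sigma_prime_power // addn1 -predn_exp prednK ?expnS // -expnS expn_gt0 p_gt0.
Qed.

(* sigma(x^2) + x = sigma(x) (1 + x) for a prime power x: the product on the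
   right lists the divisors of x^2, counting x twice. *)
Lemma sigma_prime_power_square p a : prime p ->
  Defs.sigma (p ^ a * p ^ a) + p ^ a = Defs.sigma (p ^ a) * (1 + p ^ a).
Proof.
move=> p_pr; have p_gt1 := prime_gt1 p_pr.
have geom1 := sigma_prime_power_geom a p_pr.
have geom2 := sigma_prime_power_geom (a + a) p_pr.
rewrite expnD in geom2.
apply/eqP; rewrite -(eqn_pmul2l (_ : 0 < p.-1)); last by lia.
apply/eqP; nia.
Qed.

Lemma coprime_prime_power_ind (P : nat -> Prop) :
  P 1 ->
  (forall p a m, prime p -> 0 < a -> 0 < m -> coprime (p ^ a) m ->
     P m -> P (p ^ a * m)) ->
  forall n, 0 < n -> P n.
Proof.
move=> P1 Pstep; elim/ltn_ind => n IH n_gt0.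
have [n_eq1 | n_gt1] : n = 1 \/ 1 < n by lia.
  by rewrite n_eq1.
have p_pr := pdiv_prime n_gt1.
have [m cop_pm def_n] := pfactor_coprime p_pr n_gt0.
have a_gt0 : 0 < logn (pdiv n) n.
  by rewrite logn_gt0 mem_primes p_pr n_gt0 pdiv_dvd.
have m_gt0 : 0 < m by move: n_gt0; rewrite def_n muln_gt0 => /andP[].
have pa_gt1 : 1 < pdiv n ^ logn (pdiv n) n.
  by rewrite -(exp1n (logn (pdiv n) n)) ltn_exp2r // prime_gt1.
rewrite def_n mulnC; apply: Pstep => //; first exact: coprimeXl.
by apply: IH => //; rewrite def_n ltn_Pmulr.
Qed.

Lemma sigma_ge n : 0 < n -> n <= Defs.sigma n.
Proof.
move=> n_gt0; rewrite /Defs.sigma (big_rem n (divisors_id n_gt0)) /=.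
exact: leq_addr.
Qed.

(* For an odd prime power x = p^a with a > 0: x + 1 <= sigma(x) <= 3x/2,
   read off from (p - 1) sigma(x) + 1 = p x with 3 <= p <= x. *)
Lemma sigma_prime_power_bounds p a : prime p -> 2 < p -> 0 < a ->
  p ^ a + 1 <= Defs.sigma (p ^ a) /\ 2 * Defs.sigma (p ^ a) <= 3 * p ^ a.
Proof.
move=> p_pr p_gt2 a_gt0.
have p_le_pa : p <= p ^ a by rewrite -{1}(expn1 p) leq_pexp2l // prime_gt0.
have geom := sigma_prime_power_geom a p_pr.
split; nia.
Qed.

Section RealEstimates.
Local Open Scope R_scope.

Lemma INR_addn m n : INR (m + n)%N = INR m + INR n.
Proof. by rewrite -plusE plus_INR. Qed.

Lemma INR_muln m n : INR (m * n)%N = INR m * INR n.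
Proof. by rewrite -multE mult_INR. Qed.

Lemma INR_leq m n : (m <= n)%N -> INR m <= INR n.
Proof. by move/leP; apply: le_INR. Qed.

Lemma INR_gt0 n : (0 < n)%N -> 0 < INR n.
Proof. by move/ltP; apply: lt_0_INR. Qed.

Lemma ln_le x y : 0 < x -> x <= y -> ln x <= ln y.
Proof. by move=> x_gt0 [lt_xy | ->]; [left; exact: ln_increasing | right]. Qed.

Lemma ln_gt0 x : 1 < x -> 0 < ln x.
Proof. by move=> x_gt1; rewrite -ln_1; apply: ln_increasing; lra. Qed.

(* (4/3)^5 <= (13/9)^4: the exponent ln(4/3)/ln(13/9) of the theorem is at
   most 4/5, the exponent that the quartic estimate below provides. *)
Lemma ln_ratio_bound : 5 * ln (4 / 3) <= 4 * ln (13 / 9).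
Proof.
have powers : (4 / 3) ^ 5 <= (13 / 9) ^ 4 by lra.
have := ln_le (pow_lt (4 / 3) 5 ltac:(lra)) powers.
by rewrite !ln_pow; try lra; simpl INR; lra.
Qed.

Lemma quartic_binomial_bound x t : 0 < x -> 0 <= t -> 2 * t <= x ->
  (5 * x + t) ^ 4 <= 625 * (x + t) * x ^ 3.
Proof.
move=> x_gt0 t_ge0 t_le.
have h1 : x ^ 2 * t <= x ^ 3 / 2 by nra.
have h2 : x * t ^ 2 <= x ^ 3 / 4 by nra.
have h3 : t ^ 3 <= x ^ 3 / 8 by nra.
have expand : (5 * x + t) ^ 4 = 625 * x ^ 4 + 500 * x ^ 3 * t
    + t * (150 * (x ^ 2 * t) + 20 * (x * t ^ 2) + t ^ 3) by ring.
have : t * (150 * (x ^ 2 * t) + 20 * (x * t ^ 2) + t ^ 3) <= t * (125 * x ^ 3).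
  by apply: Rmult_le_compat_l => //; nra.
rewrite expand; nra.
Qed.

(* The real core of the prime-power case: with A = sigma(x), B = sigma(x^2),
   the constraints of sigma_prime_power_bounds and of the identity
   B + x = A (1 + x) force B^4 <= A^5 x^3, i.e. I(x^2)^4 <= I(x)^5. *)
Lemma prime_power_quartic_bound x A B :
  5 <= x -> x + 1 <= A -> 2 * A <= 3 * x -> B + x = A * (1 + x) ->
  B ^ 4 <= A ^ 5 * x ^ 3.
Proof.
move=> x_ge5 A_ge A_le eqB.
have B_le : 5 * B <= A * (4 * x + A) by nra.
have B_ge0 : 0 <= 5 * B by nra.
have quart := quartic_binomial_bound (x := x) (t := A - x) ltac:(lra) ltac:(lra) ltac:(lra).
replace (5 * x + (A - x)) with (4 * x + A) in quart by ring.
replace (x + (A - x)) with A in quart by ring.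
have := pow_incr _ _ 4 (conj B_ge0 B_le).
have A4_ge0 : 0 <= A ^ 4 by apply: pow_le; lra.
have := Rmult_le_compat_l _ _ _ A4_ge0 quart.
replace ((5 * B) ^ 4) with (625 * B ^ 4) by ring.
replace ((A * (4 * x + A)) ^ 4) with (A ^ 4 * (4 * x + A) ^ 4) by ring.
nra.
Qed.

End RealEstimates.

Section Abundancy.
Local Open Scope R_scope.

Lemma abundancy_ge1 n : (0 < n)%N -> 1 <= abundancy n.
Proof.
move=> n_gt0; have n_pos := INR_gt0 n_gt0.
have := INR_leq (sigma_ge n_gt0); rewrite /abundancy => le_n_sigma.
apply: (Rmult_le_reg_r (INR n)) => //.
by rewrite /Rdiv Rmult_assoc Rinv_l; lra.
Qed.

Lemma abundancy_coprime_mul m n : (0 < m)%N -> (0 < n)%N -> coprime m n ->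
  abundancy (m * n) = abundancy m * abundancy n.
Proof.
move=> m_gt0 n_gt0 cop_mn; have := INR_gt0 m_gt0; have := INR_gt0 n_gt0.
rewrite /abundancy sigma_coprime_mul // !INR_muln => n_pos m_pos.
by field; lra.
Qed.

Lemma abundancy_prime_power_lt p a : prime p ->
  INR p.-1 * abundancy (p ^ a)%N < INR p.
Proof.
move=> p_pr.
have X_pos : 0 < INR (p ^ a)%N by apply: INR_gt0; rewrite expn_gt0 prime_gt0.
have geom := f_equal INR (sigma_prime_power_geom a p_pr).
rewrite INR_addn !INR_muln /= in geom.
have -> : INR p.-1 * abundancy (p ^ a)%N = INR p - / INR (p ^ a)%N.
  rewrite /abundancy; apply: (Rmult_eq_reg_r (INR (p ^ a)%N)); last lra.
  by field_simplify; lra.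
by have := Rinv_0_lt_compat _ X_pos; lra.
Qed.

Lemma abundancy_prime_power_quartic p a : prime p -> (2 < p)%N -> (0 < a)%N ->
  (5 <= p ^ a)%N -> abundancy (p ^ a * p ^ a)%N ^ 4 <= abundancy (p ^ a)%N ^ 5.
Proof.
move=> p_pr p_gt2 a_gt0 pa_ge5.
have [A_ge A_le] := sigma_prime_power_bounds p_pr p_gt2 a_gt0.
have eqB := f_equal INR (sigma_prime_power_square a p_pr).
move: A_ge A_le eqB; rewrite /abundancy.
set x := (p ^ a)%N; set A := Defs.sigma x; set B := Defs.sigma (x * x).
move=> /INR_leq A_ge /INR_leq A_le eqB.
rewrite ?INR_muln ?INR_addn ?INR_0 in A_ge A_le eqB *.
have [two three] : INR 2 = 2 /\ INR 3 = 3 by split; rewrite INR_IZR_INZ.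
rewrite two three in A_le; change (INR 1) with 1 in A_ge, eqB.
have x_ge5 : 5 <= INR x by have := INR_leq pa_ge5; rewrite INR_IZR_INZ /=.
have quart : INR B ^ 4 <= INR A ^ 5 * INR x ^ 3.
  by apply: prime_power_quartic_bound => //; lra.
have x8_pos : 0 < INR x ^ 8 by apply: pow_lt; lra.
have diff : (INR A / INR x) ^ 5 - (INR B / (INR x * INR x)) ^ 4
    = (INR A ^ 5 * INR x ^ 3 - INR B ^ 4) / INR x ^ 8 by field; lra.
have : 0 <= (INR A ^ 5 * INR x ^ 3 - INR B ^ 4) / INR x ^ 8.
  by apply: Rmult_le_pos; [lra | left; apply: Rinv_0_lt_compat].
lra.
Qed.

End Abundancy.

Section SquareInequality.
Local Open Scope R_scope.

Lemma abundancy_odd_prime_power_square p a : prime p -> odd p -> (0 < a)%N ->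
  ln (4 / 3) * ln (abundancy (p ^ a * p ^ a)%N)
    <= ln (13 / 9) * ln (abundancy (p ^ a)%N).
Proof.
move=> p_pr odd_p a_gt0.
have p_gt2 : (2 < p)%N.
  by have := prime_gt1 p_pr; case: (ltngtP p 2) => // p_eq2; rewrite p_eq2 in odd_p.
have p_le_pa : (p <= p ^ a)%N by rewrite -{1}(expn1 p) leq_pexp2l // prime_gt0.
have odd_pa : odd (p ^ a) by rewrite oddX odd_p orbT.
have [pa_eq3 | pa_ge5] : (p ^ a = 3 \/ 5 <= p ^ a)%N.
  have : (p ^ a != 4)%N by apply/eqP => pa_eq4; rewrite pa_eq4 in odd_pa.
  by move=> /eqP; lia.
  have sigma3 : Defs.sigma 3 = 4%N by rewrite /Defs.sigma unlock.
  have sigma9 : Defs.sigma (3 * 3) = 13%N by rewrite /Defs.sigma unlock.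
  rewrite pa_eq3 /abundancy sigma3 sigma9.
  by rewrite !INR_IZR_INZ /=; lra.
have pa_gt0 : (0 < p ^ a)%N by rewrite expn_gt0 prime_gt0.
have I1_ge1 := abundancy_ge1 pa_gt0.
have I2_ge1 : 1 <= abundancy (p ^ a * p ^ a)%N.
  by apply: abundancy_ge1; rewrite muln_gt0 pa_gt0.
have quart := abundancy_prime_power_quartic p_pr p_gt2 a_gt0 pa_ge5.
have := ln_le (pow_lt (abundancy (p ^ a * p ^ a)%N) 4 ltac:(lra)) quart.
rewrite !ln_pow; try lra; simpl INR => ln_quart.
have ln_I1_ge0 : 0 <= ln (abundancy (p ^ a)%N).
  by rewrite -ln_1; apply: ln_le; lra.
have := ln_ratio_bound; have := ln_gt0 (x := 4 / 3) ltac:(lra).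
nra.
Qed.

Lemma abundancy_odd_square n : (0 < n)%N -> odd n ->
  ln (4 / 3) * ln (abundancy (n * n)%N) <= ln (13 / 9) * ln (abundancy n).
Proof.
move: n; apply: (coprime_prime_power_ind (P := fun n => odd n -> _)).
  have sigma1 : Defs.sigma 1 = 1%N by rewrite /Defs.sigma unlock.
  move=> _; rewrite /abundancy muln1 sigma1 /=.
  by rewrite /Rdiv Rmult_1_l Rinv_1 ln_1; lra.
move=> p a m p_pr a_gt0 m_gt0 cop IH.
rewrite oddM oddX (negbTE (lt0n_neq0 a_gt0)) /= => /andP[odd_p odd_m].
set x := (p ^ a)%N.
have x_gt0 : (0 < x)%N by rewrite expn_gt0 prime_gt0.
have pos k : (0 < k)%N -> 0 < abundancy k.
  by move=> k_gt0; have := abundancy_ge1 k_gt0; lra.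
have split_sq : abundancy (x * m * (x * m)) = abundancy (x * x) * abundancy (m * m).
  rewrite mulnACA abundancy_coprime_mul ?muln_gt0 ?x_gt0 ?m_gt0 //.
  by rewrite coprimeMl !coprimeMr cop.
rewrite split_sq (abundancy_coprime_mul x_gt0 m_gt0 cop).
have [xx_gt0 mm_gt0] : (0 < x * x)%N /\ (0 < m * m)%N by rewrite !muln_gt0 x_gt0 m_gt0.
rewrite (ln_mult _ _ (pos _ xx_gt0) (pos _ mm_gt0)).
rewrite (ln_mult _ _ (pos _ x_gt0) (pos _ m_gt0)).
have := abundancy_odd_prime_power_square p_pr odd_p a_gt0; rewrite -/x.
have := IH odd_m; lra.
Qed.

End SquareInequality.

Section EulerianForm.
Local Open Scope R_scope.

Lemma eulerian_form_odd_pos N q k n : eulerian_form N q k n -> (0 < n)%N /\ odd n.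
Proof.
move=> [[odd_N [N_gt0 _]] [def_N _]]; split.
  by rewrite lt0n; apply: contraTneq N_gt0 => n_eq0; rewrite def_N n_eq0 muln0.
by move: odd_N; rewrite def_N oddM (oddX n) => /andP[].
Qed.

(* In the Eulerian form q >= 5, so I(q^k) < 5/4 and I(n^2) = 2 / I(q^k) > 8/5. *)
Lemma eulerian_form_square_abundancy N q k n :
  eulerian_form N q k n -> 8 / 5 < abundancy (n ^ 2)%N.
Proof.
move=> euler; have [n_gt0 _] := eulerian_form_odd_pos euler.
case: euler => [[_ [N_gt0 sigma_N]] [def_N [q_pr [q_mod4 [_ cop_qn]]]]].
have q_ge5 : (5 <= q)%N by have := prime_gt1 q_pr; lia.
have qk_gt0 : (0 < q ^ k)%N by rewrite expn_gt0 prime_gt0.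
have n2_gt0 : (0 < n ^ 2)%N by rewrite expn_gt0 n_gt0.
have I_N : abundancy N = 2.
  rewrite /abundancy sigma_N INR_muln.
  by have N_pos := INR_gt0 N_gt0; change (INR 2) with 2; field; lra.
have split_N : abundancy N = abundancy (q ^ k)%N * abundancy (n ^ 2)%N.
  by rewrite def_N abundancy_coprime_mul // coprimeXl // coprimeXr.
have I_qk_lt := abundancy_prime_power_lt k q_pr.
have q_pred : INR q = INR q.-1 + 1 by rewrite -S_INR prednK // prime_gt0.
have q_pred_ge4 : 4 <= INR q.-1.
  by have := INR_leq (_ : (4 <= q.-1)%N); rewrite INR_IZR_INZ /=; apply; lia.
have := abundancy_ge1 qk_gt0; have := abundancy_ge1 n2_gt0.
nra.
Qed.

End EulerianForm.

Local Open Scope R_scope.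

Theorem theorem1 (N q k n : nat) :
  eulerian_form N q k n ->
  Rgt (abundancy n)
      (Rpower (Rdiv (INR 8) (INR 5))
              (Rdiv (ln (Rdiv (INR 4) (INR 3))) (ln (Rdiv (INR 13) (INR 9))))).
Proof.
move=> euler.
have [n_gt0 odd_n] := eulerian_form_odd_pos euler.
have I_n2_gt := eulerian_form_square_abundancy euler.
have K := abundancy_odd_square n_gt0 odd_n; rewrite mulnn in K.
have I_n_pos : 0 < abundancy n by have := abundancy_ge1 n_gt0; lra.
have ln43_pos := ln_gt0 (x := 4 / 3) ltac:(lra).
have ln139_pos := ln_gt0 (x := 13 / 9) ltac:(lra).
have ln_I_n2_gt : ln (8 / 5) < ln (abundancy (n ^ 2)%N) by apply: ln_increasing; lra.
rewrite !INR_IZR_INZ /Rgt /Rpower -(exp_ln _ I_n_pos) /=.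
apply: exp_increasing; apply: (Rmult_lt_reg_l (ln (13 / 9))) => //.
replace (ln (13 / 9) * (ln (4 / 3) / ln (13 / 9) * ln (8 / 5)))
  with (ln (4 / 3) * ln (8 / 5)) by (field; lra).
nra.
Qed.
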